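(* For every $0<p<q<1$ there exists a real sequence $\{a_n\}_{n\geq 0}$ such that $\{a_n^p\}_{n\geq 0}$ converges to $0$ but $\{a_n^q\}_{n\geq 0}$ does not converge.
   Context: For a real sequence $\{a_n\}_{n\geq0}$ and $0<r<1$, $a^r_n=\sum_{i=0}^n\binom{n}{i}r^i(1-r)^{n-i}a_i$. *)

From Stdlib Require Import Reals.
Open Scope R_scope.

(* Binomial (Euler) transform: a^r_n = sum_{i=0}^n C(n,i) r^i (1-r)^(n-i) a_i *)
Definition binom_transform (r : R) (a : nat -> R) (n : nat) : R :=
  sum_f_R0 (fun i => Binomial.C n i * r ^ i * (1 - r) ^ (n - i) * a i) n.

(** The binomial transform of a geometric sequence is again geometric:
    [a_i = c^i] gives [a^r_n = (1 - r + r c)^n].  Choosing [c = 1 - 2/q]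
    makes the ratio [-1] for [r = q], so [a^q_n = (-1)^n] oscillates, while
    for [r = p] the ratio is [1 - 2p/q], which lies in [(-1, 1)], so
    [a^p_n] tends to [0]. *)

From Stdlib Require Import Reals Lra Lia.
Open Scope R_scope.

Lemma binom_transform_pow (r c : R) (n : nat) :
  binom_transform r (pow c) n = (1 - r + r * c) ^ n.
Proof.
  unfold binom_transform.
  replace (1 - r + r * c) with (r * c + (1 - r)) by ring.
  rewrite binomial.
  apply sum_eq; intros i _.
  rewrite Rpow_mult_distr; ring.
Qed.

Lemma Un_cv_pow_0 (x : R) : Rabs x < 1 -> Un_cv (pow x) 0.
Proof.
  intros Hx eps Heps.
  destruct (pow_lt_1_zero x Hx eps Heps) as [N HN].
  exists N; intros n Hn.
  unfold R_dist; rewrite Rminus_0_r; exact (HN n Hn).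
Qed.

Lemma Rabs_pow_neg1 (n : nat) : Rabs ((-1) ^ n) = 1.
Proof.
  rewrite <- RPow_abs.
  replace (Rabs (-1)) with 1 by (rewrite Rabs_left; lra).
  apply pow1.
Qed.

Lemma not_cv_pow_neg1 : ~ (exists l : R, Un_cv (pow (-1)) l).
Proof.
  intros [l Hl].
  destruct (Hl 1 Rlt_0_1) as [N HN].
  assert (HN0 := HN N (le_n N)).
  assert (HN1 := HN (S N) (le_S _ _ (le_n N))).
  unfold R_dist in HN0, HN1; simpl in HN1.
  (* Consecutive terms are [x] and [-x] with [|x| = 1], at distance [2]. *)
  assert (Hgap : 2 <= Rabs ((-1) ^ N - l) + Rabs (l - -1 * (-1) ^ N)).
  { replace 2 with (Rabs ((-1) ^ N - l + (l - -1 * (-1) ^ N))).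
    - apply Rabs_triang.
    - replace ((-1) ^ N - l + (l - -1 * (-1) ^ N)) with (2 * (-1) ^ N) by ring.
      rewrite Rabs_mult, Rabs_pow_neg1, Rabs_right; lra. }
  rewrite Rabs_minus_sym in HN1; lra.
Qed.

Theorem proposition2 :
  forall p q : R, 0 < p -> p < q -> q < 1 ->
  exists a : nat -> R,
    Un_cv (binom_transform p a) 0 /\
    ~ (exists l : R, Un_cv (binom_transform q a) l).
Proof.
  intros p q Hp Hpq Hq.
  exists (pow (1 - 2 / q)).
  split.
  - apply Un_cv_ext with (un := pow (1 - 2 * (p / q))).
    + intro n; rewrite binom_transform_pow; f_equal; field; lra.
    + apply Un_cv_pow_0.
      assert (Hpq' : 0 < p / q < 1).
      { split; [apply Rdiv_lt_0_compat; lra|].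
        apply Rmult_lt_reg_r with q; [lra|].
        unfold Rdiv; rewrite Rmult_assoc, Rinv_l; lra. }
      apply Rabs_def1; lra.
  - intros [l Hl]; apply not_cv_pow_neg1; exists l.
    apply Un_cv_ext with (un := binom_transform q (pow (1 - 2 / q))); [|exact Hl].
    intro n; rewrite binom_transform_pow; f_equal; field; lra.
Qed.
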